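(* In the setting of the context (no depth assumption), for every $n\geq1$ the following hold: (i) $M_{n-1}$ is a free right $M_{n-2}$-module with a basis contained in $C_{M_{n-1}}(N)$ if and only if there exist orthogonal dual bases for $E_{M_{n-2}}$ contained in $C_{M_{n-1}}(N)$; (ii) $M_n$ is a free right $M_{n-1}$-module with a basis contained in $C_{M_n}(M)$ if and only if there exist orthogonal dual bases for $E_{M_{n-1}}$ contained in $C_{M_n}(M)$.
   Context: $k$ is a field; $C_R(S)=\{r\in R:rs=sr\ \forall s\in S\}$. $N\subseteq M$ is a strongly separable, irreducible extension of $k$-algebras: $C_M(N)=k1$ and there are an $N$-bimodule map $E:M\to N$ and $x_1,\dots,x_n,y_1,\dots,y_n\in M$ with $\sum_iE(mx_i)y_i=m=\sum_ix_iE(y_im)$ for all $m\in M$, $E(1)\neq0$, $\sum_ix_iy_i\neq0$; normalized so that $E(1)=1$, whence $\sum_ix_iy_i=\lambda^{-1}1$ with $0\neq\lambda\in k$. Basic construction: given $S\subseteq R$, an $S$-bimodule map $E_S:R\to S$ with $E_S(1)=1$ and $r_i,s_i\in R$ with $\sum_iE_S(rr_i)s_i=r=\sum_ir_iE_S(s_ir)$ and $\sum_ir_is_i=\lambda^{-1}1$, set $R_1=R\otimes_SR$ with product $(a\otimes b)(c\otimes d)=aE_S(bc)\otimes d$, unit $\sum_ir_i\otimes s_i$, $R\subseteq R_1$ via $r\mapsto\sum_irr_i\otimes s_i$, and $E_R:R_1\to R$, $a\otimes b\mapsto\lambda ab$; then $E_R$ with $\lambda^{-1}r_i\otimes1$,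 $1\otimes s_i$ satisfy the same conditions with the same $\lambda$. Jones tower: $M_{-1}=N$, $M_0=M$, $E_{M_{-1}}=E$, and inductively $M_n$ with $E_{M_{n-1}}:M_n\to M_{n-1}$ is the basic construction of $(M_{n-2}\subseteq M_{n-1},E_{M_{n-2}})$. For an $S$-bimodule map $G:R\to S$, orthogonal dual bases for $G$ are finite families $\{z_i\},\{w_i\}$ in $R$ with $G(w_iz_j)=\delta_{ij}$ and $\sum_iz_iG(w_ix)=x=\sum_iG(xz_i)w_i$ for all $x\in R$. *)

From HB Require Import structures.
From mathcomp Require Import all_boot all_order all_algebra.
Set Implicit Arguments. Unset Strict Implicit. Unset Printing Implicit Defensive.
Import GRing.Theory.
Local Open Scope ring_scope.

(* All algebras are (nontrivial, associative, unital) k-algebras, [algType k].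
   A subalgebra inclusion S ⊆ R is represented by an injective unital k-algebra
   morphism [iota : S -> R]. *)

Section Defs.
Variable k : fieldType.

Definition klinear (U V : lmodType k) (f : U -> V) : Prop :=
  forall (c : k) (a b : U), f (c *: a + b) = c *: f a + f b.

Definition alg_mor (A B : algType k) (f : A -> B) : Prop :=
  klinear f /\ (forall a b, f (a * b) = f a * f b) /\ f 1 = 1.

Definition bimod_map (S R : algType k) (iota : S -> R) (G : R -> S) : Prop :=
  (forall a b, G (a + b) = G a + G b) /\
  (forall (s t : S) (r : R), G (iota s * r * iota t) = s * G r * t).

Definition centralizes (A R : algType k) (f : A -> R) (r : R) : Prop :=
  forall a : A, r * f a = f a * r.

Definition free_right_basis (S R : algType k) (iota : S -> R) (B : R -> Prop)
  : Prop :=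
  (forall x : R, exists (s : seq R) (c : R -> S),
      (forall b, b \in s -> B b) /\ x = \sum_(b <- s) b * iota (c b)) /\
  (forall (s : seq R) (c : R -> S), uniq s -> (forall b, b \in s -> B b) ->
      \sum_(b <- s) b * iota (c b) = 0 -> forall b, b \in s -> c b = 0).

Definition orth_dual_bases (S R : algType k) (iota : S -> R) (G : R -> S)
  (p : nat) (z w : 'I_p -> R) : Prop :=
  (forall i j : 'I_p, G (w i * z j) = (i == j)%:R) /\
  (forall x : R, \sum_(i < p) z i * iota (G (w i * x)) = x /\
                 \sum_(i < p) iota (G (x * z i)) * w i = x).

(* [beta : R -> R -> R1] is the tensor product R ⊗_S R (a ⊗ b = beta a b):
   k-bilinear, S-balanced and universal among such maps into k-modules. *)
Definition bilin_balanced (S R : algType k) (iota : S -> R) (V : lmodType k)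
  (f : R -> R -> V) : Prop :=
  (forall c a a' b, f (c *: a + a') b = c *: f a b + f a' b) /\
  (forall c a b b', f a (c *: b + b') = c *: f a b + f a b') /\
  (forall a (s : S) b, f (a * iota s) b = f a (iota s * b)).

Definition is_tensor (S R R1 : algType k) (iota : S -> R) (beta : R -> R -> R1)
  : Prop :=
  bilin_balanced iota beta /\
  forall (V : lmodType k) (f : R -> R -> V), bilin_balanced iota f ->
    exists g : R1 -> V, klinear g /\ (forall a b, g (beta a b) = f a b) /\
      forall g' : R1 -> V, klinear g' -> (forall a b, g' (beta a b) = f a b) ->
        forall t, g' t = g t.

(* Basic construction: given S ⊆ R (iotaS), E_S : R -> S, r_i, s_i (i < q)
   and lam, the algebra R1 with inclusion iotaR : R -> R1, expectation
   E_R : R1 -> R, realised as R1 = R ⊗_S R (pure tensors beta a b) with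
   (a⊗b)(c⊗d) = a E_S(bc) ⊗ d, 1 = sum r_i ⊗ s_i, r |-> sum r r_i ⊗ s_i,
   E_R(a ⊗ b) = lam a b. *)
Definition basic_construction (S R R1 : algType k) (iotaS : S -> R)
  (ES : R -> S) (q : nat) (r s : 'I_q -> R) (lam : k)
  (iotaR : R -> R1) (ER : R1 -> R) (beta : R -> R -> R1) : Prop :=
  [/\ is_tensor iotaS beta,
      forall a b c d, beta a b * beta c d = beta (a * iotaS (ES (b * c))) d,
      1 = \sum_(i < q) beta (r i) (s i),
      forall x, iotaR x = \sum_(i < q) beta (x * r i) (s i)
    & klinear ER /\ forall a b, ER (beta a b) = lam *: (a * b)].

(* Jones tower, shifted indexing: T j = M_{j-1}, so T 0 = N, T 1 = M,
   T (n+1) = M_n.  iota n : T n -> T n.+1 is the inclusion,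
   E n : T n.+1 -> T n is E_{M_{n-1}}, beta n : T n.+1 -> T n.+1 -> T n.+2
   the pure tensors of M_n = M_{n-1} ⊗_{M_{n-2}} M_{n-1}. *)
Variables (T : nat -> algType k) (beta : forall n, T n.+1 -> T n.+1 -> T n.+2)
  (q : nat) (x y : 'I_q -> T 1) (lam : k).

Fixpoint tower_qb (n : nat) : ('I_q -> T n.+1) * ('I_q -> T n.+1) :=
  match n return ('I_q -> T n.+1) * ('I_q -> T n.+1) with
  | 0 => (x, y)
  | n'.+1 => let rs := tower_qb n' in
      (fun i => lam^-1 *: @beta n' (rs.1 i) 1, fun i => @beta n' 1 (rs.2 i))
  end.

Variable iota : forall n, T n -> T n.+1.

Fixpoint upN (n : nat) : T 0 -> T n :=
  match n return T 0 -> T n with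
  | 0 => fun a => a
  | n'.+1 => fun a => @iota n' (upN n' a)
  end.

Fixpoint upM (n : nat) : T 1 -> T n.+1 :=
  match n return T 1 -> T n.+1 with
  | 0 => fun a => a
  | n'.+1 => fun a => @iota n'.+1 (upM n' a)
  end.

End Defs.

(* Every level of the Jones tower is an index-finite expectation: the basic
   construction of E with quasi-basis (r_i, s_i) has the quasi-basis
   (lam^-1 r_i ⊗ 1, 1 ⊗ s_i), as one checks on pure tensors thanks to the
   universal property of R ⊗_S R.  For an index-finite G : R -> S both
   equivalences are then instances of one statement about any subalgebra.
   Orthogonal dual bases (z, w) make {z_i} a free basis, the coordinates of x
   being G (w_i x).  Conversely, expanding the r_i in a free basis yields
   finitely many basis elements b and w_b with x = sum_b b G (w_b x); freeness
   forces G (w_a b) = delta_ab, and nondegeneracy of G gives the expansion on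
   the other side.  Finally, if the z_i commute with io s then so do the w_j,
   since w_j io s = sum_i io (G (w_j io s z_i)) w_i = io s w_j. *)

From HB Require Import structures.
From mathcomp Require Import all_boot all_order all_algebra.
Import GRing.Theory.
Local Open Scope ring_scope.

Set Implicit Arguments. Unset Strict Implicit. Unset Printing Implicit Defensive.

Lemma sum_partition_seq (V : nmodType) (I : eqType) (F l : seq I) (g : I -> V) :
  uniq F -> {subset l <= F} ->
  \sum_(i <- l) g i = \sum_(j <- F) \sum_(i <- l | i == j) g i.
Proof.
move=> uF lF; rewrite (exchange_big_dep xpredT) //=.
apply: eq_big_seq => i /lF iF.
by rewrite -big_filter (eq_filter (eq_sym i)) filter_pred1_uniq // big_seq1.
Qed.

Definition quasi_basis (k : fieldType) (S R : algType k) (io : S -> R)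
    (G : R -> S) (q : nat) (r s : 'I_q -> R) : Prop :=
  forall x, \sum_(i < q) r i * io (G (s i * x)) = x /\
            \sum_(i < q) io (G (x * r i)) * s i = x.

(* Watatani's expectations of index-finite type; E 1 = 1 and the
   nonvanishing conditions of strong separability are not part of it. *)
Definition index_finite (k : fieldType) (S R : algType k) (io : S -> R)
    (G : R -> S) (q : nat) (r s : 'I_q -> R) : Prop :=
  [/\ alg_mor io, bimod_map io G & quasi_basis io G r s].

Section IndexFinite.
Variables (k : fieldType) (S R : algType k) (io : S -> R) (G : R -> S).
Variables (q : nat) (r s : 'I_q -> R).
Hypothesis G_fin : index_finite io G r s.

Let io_linear : linear io. Proof. by case: G_fin => -[]. Qed.
HB.instance Definition _ := GRing.isLinear.Build k S R *:%R io io_linear.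

Let io_monoid : monoid_morphism io.
Proof. by case: G_fin => -[_ []]. Qed.
HB.instance Definition _ := GRing.isMonoidMorphism.Build S R io io_monoid.

Let G_nmod : nmod_morphism G.
Proof.
case: G_fin => _ [GD _] _; split=> //.
by apply: (addrI (G 0)); rewrite -GD !addr0.
Qed.
HB.instance Definition _ := GRing.isNmodMorphism.Build R S G G_nmod.

Lemma G_bimod u v x : G (io u * x * io v) = u * G x * v.
Proof. by case: G_fin => _ [_ ->]. Qed.

Lemma G_mull u x : G (io u * x) = u * G x.
Proof. by have := G_bimod u 1 x; rewrite rmorph1 !mulr1. Qed.

Lemma G_mulr v x : G (x * io v) = G x * v.
Proof. by have := G_bimod 1 v x; rewrite rmorph1 !mul1r. Qed.

Lemma G_nondegenerate v : (forall u, G (v * u) = 0) -> v = 0.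
Proof.
move=> Gv0; case: G_fin => _ _ /(_ v)[_ <-].
by rewrite big1 // => i _; rewrite Gv0 raddf0 mul0r.
Qed.

Lemma quasi_basis_of_left p (z w : 'I_p -> R) :
  (forall x, \sum_(i < p) z i * io (G (w i * x)) = x) -> quasi_basis io G z w.
Proof.
move=> zw x; split=> //; apply/subr0_eq/G_nondegenerate => u.
rewrite mulrBl raddfB /= mulr_suml raddf_sum /=.
rewrite (eq_bigr (fun i => G (x * (z i * io (G (w i * u)))))) => [|i _].
  by rewrite -raddf_sum -mulr_sumr zw subrr.
by rewrite -mulrA G_mull mulrA G_mulr.
Qed.

Lemma orth_dual_bases_centralizes (A : algType k) (g : A -> S)
    p (z w : 'I_p -> R) :
  orth_dual_bases io G z w ->
  (forall i, centralizes (fun a => io (g a)) (z i)) ->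
  forall j, centralizes (fun a => io (g a)) (w j).
Proof.
move=> [zw_orth zw] zc j a.
rewrite -[LHS](zw _).2 (bigD1 j) //= big1 => [|i ji].
  by rewrite -mulrA -zc mulrA G_mulr zw_orth eqxx mul1r addr0.
by rewrite -mulrA -zc mulrA G_mulr zw_orth eq_sym (negbTE ji) mul0r raddf0 mul0r.
Qed.

Lemma orth_dual_bases_free p (z w : 'I_p -> R) :
  orth_dual_bases io G z w -> free_right_basis io (fun b => exists i, b = z i).
Proof.
move=> [zw_orth zw]; have z_inj : injective z.
  move=> i j zij; apply/eqP; have := zw_orth i j; rewrite -zij zw_orth eqxx.
  by case: (i == j) => // /eqP; rewrite oner_eq0.
have G_wz j b : (exists i, b = z i) -> G (w j * b) = (b == z j)%:R.
  by move=> [i ->]; rewrite zw_orth (inj_eq z_inj) eq_sym.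
split=> [x | l c ul lz l0 b bl].
  exists (map z (enum 'I_p)), (fun b => \sum_(i | z i == b) G (w i * x)).
  split=> [b /mapP[i _ ->] | ]; first by exists i.
  rewrite big_map big_enum /= -{1}[x](zw x).1; apply: eq_bigr => i _.
  by rewrite (big_pred1 i) // => j /=; rewrite (inj_eq z_inj).
have [j bj] := lz b bl.
have /(congr1 (fun t => G (w j * t))) := l0.
rewrite mulr0 raddf0 mulr_sumr raddf_sum /=.
rewrite (eq_big_seq (fun b' => (b' == b)%:R * c b')) => [|b' /lz b'z].
  rewrite (bigD1_seq b) //= eqxx mul1r big1 ?addr0 // => b' /negbTE ->.
  by rewrite mul0r.
by rewrite mulrA G_mulr G_wz // bj.
Qed.

Section FreeBasis.
Variable B : R -> Prop.
Hypothesis B_free : free_right_basis io B.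

Lemma free_basis_coord_uniq (F : seq R) (c1 c2 : R -> S) :
  uniq F -> {in F, forall b, B b} ->
  \sum_(b <- F) b * io (c1 b) = \sum_(b <- F) b * io (c2 b) -> {in F, c1 =1 c2}.
Proof.
move=> uF FB e b bF; apply/subr0_eq.
apply: (B_free.2 F (fun b => c1 b - c2 b)) uF FB _ b bF.
under eq_bigr do rewrite raddfB mulrBr.
by rewrite sumrB e subrr.
Qed.

Lemma free_basis_common_support :
  exists (F : seq R) (a : 'I_q -> R -> S), [/\ uniq F, {in F, forall b, B b} &
    forall i, r i = \sum_(b <- F) b * io (a i b)].
Proof.
have /fin_all_exists[lc lcP] i : exists lc : seq R * (R -> S),
    {in lc.1, forall b, B b} /\ r i = \sum_(b <- lc.1) b * io (lc.2 b).
  by have [l [c []]] := B_free.1 (r i); exists (l, c).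
pose F := undup (flatten [seq (lc i).1 | i <- enum 'I_q]).
have lcF i : {subset (lc i).1 <= F}.
  move=> b bl; rewrite mem_undup; apply/flattenP; exists (lc i).1 => //.
  by apply: map_f; rewrite mem_enum.
exists F, (fun i b => \sum_(b' <- (lc i).1 | b' == b) (lc i).2 b'); split.
- exact: undup_uniq.
- by move=> b; rewrite mem_undup => /flattenP[_ /mapP[i _ ->]] /(lcP i).1.
- move=> i; rewrite {1}(lcP i).2 (sum_partition_seq _ (undup_uniq _) (lcF i)).
  apply: eq_bigr => b _; rewrite raddf_sum mulr_sumr.
  by apply: eq_bigr => b' /eqP ->.
Qed.

Lemma free_basis_left_dual :
  exists (F : seq R) (w : R -> R), [/\ uniq F, {in F, forall b, B b} &
    forall x, \sum_(b <- F) b * io (G (w b * x)) = x].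
Proof.
have [F [a [uF FB ra]]] := free_basis_common_support.
exists F, (fun b => \sum_(i < q) io (a i b) * s i); split=> // x.
case: G_fin => _ _ /(_ x)[xr _]; rewrite -[RHS]xr.
under eq_bigr => b _.
  rewrite mulr_suml !raddf_sum mulr_sumr.
  under eq_bigr do rewrite /= -mulrA G_mull rmorphM mulrA.
  over.
by rewrite exchange_big; apply: eq_bigr => i _; rewrite ra mulr_suml.
Qed.

Lemma free_basis_orth_dual_bases :
  exists p (z w : 'I_p -> R), orth_dual_bases io G z w /\ forall i, B (z i).
Proof.
have [F [w [uF FB Fw]]] := free_basis_left_dual.
have orth a b : a \in F -> b \in F -> G (w a * b) = (a == b)%:R.
  move=> aF bF; apply: (free_basis_coord_uniq (c1 := fun a => G (w a * b))
                                (c2 := fun a => (a == b)%:R) uF FB) => //.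
  rewrite Fw (bigD1_seq b) //= eqxx rmorph1 mulr1 big1 ?addr0 // => a' /negbTE ->.
  by rewrite raddf0 mulr0.
exists (size F), (nth 0 F), (fun i => w (nth 0 F i)).
split=> [|i]; last exact/FB/mem_nth.
split=> [i j|]; first by rewrite orth ?mem_nth // nth_uniq.
apply: quasi_basis_of_left => x.
by rewrite -[in RHS](Fw x) [RHS](big_nth 0) big_mkord.
Qed.

End FreeBasis.

Lemma free_centralizing_basisP (A : algType k) (g : A -> S) :
  (exists B, free_right_basis io B /\
     forall b, B b -> centralizes (fun a => io (g a)) b) <->
  (exists p (z w : 'I_p -> R), orth_dual_bases io G z w /\
     forall i, centralizes (fun a => io (g a)) (z i) /\
               centralizes (fun a => io (g a)) (w i)).
Proof.
split=> [[B [B_free Bc]] | [p [z [w [zw zwc]]]]].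
  have [p [z [w [zw zB]]]] := free_basis_orth_dual_bases B_free.
  exists p, z, w; split=> // i; split; first exact/Bc/zB.
  by apply: orth_dual_bases_centralizes zw _ i => j; exact/Bc/zB.
exists (fun b => exists i, b = z i); split; first exact: orth_dual_bases_free zw.
by move=> _ [i ->]; exact: (zwc i).1.
Qed.

End IndexFinite.

Lemma is_tensor_ext (k : fieldType) (S R R1 : algType k) (iS : S -> R)
    (beta : R -> R -> R1) (V : lmodType k) (g1 g2 : R1 -> V) :
  is_tensor iS beta -> klinear g1 -> klinear g2 ->
  (forall a b, g1 (beta a b) = g2 (beta a b)) -> g1 =1 g2.
Proof.
move=> [[betaZDl [betaZDr betaA]] beta_univ] g1_lin g2_lin g12 t.
have g1_beta : bilin_balanced iS (fun a b => g1 (beta a b)).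
  split; [|split] => [c a a' b | c a b b' | a u b]; last by rewrite betaA.
    by rewrite betaZDl g1_lin.
  by rewrite betaZDr g1_lin.
have [g [_ [_ g_uniq]]] := beta_univ V _ g1_beta.
by rewrite (g_uniq g1) // (g_uniq g2).
Qed.

Section BasicConstruction.
Variables (k : fieldType) (S R R1 : algType k) (iS : S -> R) (ES : R -> S).
Variables (q : nat) (r s : 'I_q -> R) (lam : k).
Variables (iR : R -> R1) (ER : R1 -> R) (beta : R -> R -> R1).
Hypotheses (lam_neq0 : lam != 0) (rs_qb : quasi_basis iS ES r s).
Hypotheses (beta_tensor : is_tensor iS beta)
  (beta_mul : forall a b c d,
     beta a b * beta c d = beta (a * iS (ES (b * c))) d)
  (beta_one : 1 = \sum_(i < q) beta (r i) (s i))
  (iR_def : forall x, iR x = \sum_(i < q) beta (x * r i) (s i))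
  (ER_lin : klinear ER) (ER_beta : forall a b, ER (beta a b) = lam *: (a * b)).

HB.instance Definition _ := GRing.isLinear.Build k R1 R *:%R ER ER_lin.

Let betaZDl c a a' b : beta (c *: a + a') b = c *: beta a b + beta a' b.
Proof. by case: beta_tensor => -[]. Qed.

Let betaZDr c a b b' : beta a (c *: b + b') = c *: beta a b + beta a b'.
Proof. by case: beta_tensor => -[_ []]. Qed.

Let betaA a u b : beta (a * iS u) b = beta a (iS u * b).
Proof. by case: beta_tensor => -[_ []]. Qed.

Let beta_suml I (l : seq I) (F : I -> R) b :
  beta (\sum_(i <- l) F i) b = \sum_(i <- l) beta (F i) b.
Proof.
have beta0 : beta 0 b = 0.
  by have := betaZDl (-1) 1 1 b; rewrite !scaleN1r !addNr.
have betaD a a' : beta (a + a') b = beta a b + beta a' b.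
  by have := betaZDl 1 a a' b; rewrite !scale1r.
exact: (big_morph (beta^~ b) betaD beta0).
Qed.

Let beta_sumr I (l : seq I) (F : I -> R) a :
  beta a (\sum_(i <- l) F i) = \sum_(i <- l) beta a (F i).
Proof.
have beta0 : beta a 0 = 0.
  by have := betaZDr (-1) a 1 1; rewrite !scaleN1r !addNr.
have betaD b b' : beta a (b + b') = beta a b + beta a b'.
  by have := betaZDr 1 a b b'; rewrite !scale1r.
exact: (big_morph (beta a) betaD beta0).
Qed.

Lemma iR_mull x a b : iR x * beta a b = beta (x * a) b.
Proof.
rewrite iR_def mulr_suml -[in RHS](rs_qb a).1 mulr_sumr beta_suml.
by apply: eq_bigr => i _; rewrite beta_mul mulrA.
Qed.

Lemma iR_mulr x a b : beta a b * iR x = beta a (b * x).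
Proof.
rewrite iR_def mulr_sumr -[in RHS](rs_qb (b * x)).2 beta_sumr.
by apply: eq_bigr => i _; rewrite beta_mul betaA mulrA.
Qed.

Lemma iR_alg_mor : alg_mor iR.
Proof.
split; [|split] => [c a b | a b |].
- rewrite !iR_def scaler_sumr -big_split; apply: eq_bigr => i _.
  by rewrite mulrDl -scalerAl betaZDl.
- rewrite [iR b]iR_def mulr_sumr iR_def; apply: eq_bigr => i _.
  by rewrite iR_mull mulrA.
- by rewrite iR_def beta_one; apply: eq_bigr => i _; rewrite mul1r.
Qed.

HB.instance Definition _ := GRing.isLinear.Build k R R1 *:%R iR iR_alg_mor.1.

Lemma ER_bimod : bimod_map iR ER.
Proof.
split=> [a b | u v]; first by rewrite raddfD.
have := is_tensor_ext beta_tensor (g1 := fun t => ER (iR u * t * iR v))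
  (g2 := fun t => u * ER t * v).
apply=> [c a b | c a b | a b] /=.
- by rewrite mulrDr mulrDl -scalerAr -scalerAl linearP.
- by rewrite linearP mulrDr mulrDl -scalerAr -scalerAl.
- by rewrite iR_mull iR_mulr !ER_beta -scalerAr -scalerAl !mulrA.
Qed.

Lemma basic_construction_quasi_basis :
  quasi_basis iR ER (fun i => lam^-1 *: beta (r i) 1) (fun i => beta 1 (s i)).
Proof.
move=> t; split.
  have := is_tensor_ext beta_tensor (g2 := id) (g1 := fun t =>
    \sum_(i < q) (lam^-1 *: beta (r i) 1) * iR (ER (beta 1 (s i) * t))).
  apply=> [c a b | c a b | a b] //=.
    rewrite scaler_sumr -big_split; apply: eq_bigr => i _ /=.
    by rewrite mulrDr -scalerAr linearP /= raddfD /= linearZ /= mulrDr -scalerAr.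
  rewrite -[in RHS](rs_qb a).1 beta_suml; apply: eq_bigr => i _.
  rewrite beta_mul mul1r ER_beta linearZ /= -scalerAl -scalerAr scalerA.
  by rewrite mulVf // scale1r iR_mulr mul1r betaA.
have := is_tensor_ext beta_tensor (g2 := id) (g1 := fun t =>
  \sum_(i < q) iR (ER (t * (lam^-1 *: beta (r i) 1))) * beta 1 (s i)).
apply=> [c a b | c a b | a b] //=.
  rewrite scaler_sumr -big_split; apply: eq_bigr => i _ /=.
  by rewrite mulrDl -scalerAl linearP /= raddfD /= linearZ /= mulrDl -scalerAl.
rewrite -[in RHS](rs_qb b).2 beta_sumr; apply: eq_bigr => i _.
rewrite -scalerAr beta_mul linearZ /= ER_beta scalerA mulVf // scale1r mulr1.
by rewrite iR_mull mulr1 betaA.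
Qed.

End BasicConstruction.

Lemma basic_construction_index_finite (k : fieldType) (S R R1 : algType k)
    (iS : S -> R) (ES : R -> S) (q : nat) (r s : 'I_q -> R) (lam : k)
    (iR : R -> R1) (ER : R1 -> R) (beta : R -> R -> R1) :
  lam != 0 -> index_finite iS ES r s ->
  basic_construction iS ES r s lam iR ER beta ->
  index_finite iR ER (fun i => lam^-1 *: beta (r i) 1) (fun i => beta 1 (s i)).
Proof.
move=> lam_neq0 [_ _ rs_qb].
move=> [beta_tensor beta_mul beta_one iR_def [ER_lin ER_beta]].
by split; [apply: iR_alg_mor | apply: ER_bimod |
           apply: basic_construction_quasi_basis]; eassumption.
Qed.

Unset Implicit Arguments.

Theorem lemma3p1 (k : fieldType) (T : nat -> algType k)
  (iota : forall n, T n -> T n.+1) (E : forall n, T n.+1 -> T n)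
  (beta : forall n, T n.+1 -> T n.+1 -> T n.+2)
  (q : nat) (x y : 'I_q -> T 1%N) (lam : k)
  (* N ⊆ M *)
  (Hiota0 : alg_mor (iota 0%N) /\ injective (iota 0%N))
  (* irreducible: C_M(N) = k1 *)
  (Hirr : forall m : T 1%N, centralizes (iota 0%N) m -> exists c : k, m = c%:A)
  (* strongly separable, normalized *)
  (HE : bimod_map (iota 0%N) (E 0%N))
  (HE1 : E 0%N 1 = 1)
  (Hqb : forall m : T 1%N,
     \sum_(i < q) iota 0%N (E 0%N (m * x i)) * y i = m /\
     m = \sum_(i < q) x i * iota 0%N (E 0%N (y i * m)))
  (Hxy : \sum_(i < q) x i * y i != 0)
  (Hlam : lam != 0)
  (Hxylam : \sum_(i < q) x i * y i = lam^-1%:A)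
  (* Jones tower *)
  (Htower : forall n, basic_construction (iota n) (E n)
              (tower_qb beta x y lam n).1 (tower_qb beta x y lam n).2 lam
              (iota n.+1) (E n.+1) (beta n)) :
  forall m : nat,
  (* n = m + 1 >= 1 :  M_{n-2} = T m, M_{n-1} = T m.+1, M_n = T m.+2 *)
  ((exists B : T m.+1 -> Prop, free_right_basis (iota m) B /\
        forall b, B b -> centralizes (upN iota m.+1) b)
   <->
   (exists (p : nat) (z w : 'I_p -> T m.+1),
        orth_dual_bases (iota m) (E m) z w /\
        forall i, centralizes (upN iota m.+1) (z i) /\
                  centralizes (upN iota m.+1) (w i)))
  /\
  ((exists B : T m.+2 -> Prop, free_right_basis (iota m.+1) B /\
        forall b, B b -> centralizes (upM iota m.+1) b)
   <->
   (exists (p : nat) (z w : 'I_p -> T m.+2),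
        orth_dual_bases (iota m.+1) (E m.+1) z w /\
        forall i, centralizes (upM iota m.+1) (z i) /\
                  centralizes (upM iota m.+1) (w i))).
Proof.
have tower n : index_finite (iota n) (E n)
    (tower_qb beta x y lam n).1 (tower_qb beta x y lam n).2.
  elim: n => [|n IHn].
    split=> [|//|u]; first exact: Hiota0.1.
    by have [xy yx] := Hqb u; split.
  exact: basic_construction_index_finite Hlam IHn (Htower n).
move=> m; split.
  exact (free_centralizing_basisP (tower m) (upN iota m)).
exact (free_centralizing_basisP (tower m.+1) (upM iota m)).
Qed.
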